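(* Let $\mathbf w\in\mathbb R^m$. (a) If $|\lambda|=2$, then $B_{\mathbf w}$ satisfies the strong majority criterion if and only if $\mathbf w(1)>\mathbf w(2)$. (b) If $|\lambda|>2$, then no nontrivial positional voting method $B_{\mathbf w}$ satisfies the strong majority criterion.
   Context: Fix an integer $n\ge 2$ and a set $\mathbf C$ of $n$ candidates. Fix a composition $\lambda=(\lambda_1,\dots,\lambda_m)$ of $n$ (positive integers with $\sum_i\lambda_i=n$), write $|\lambda|=m$ and $[m]=\{1,\dots,m\}$. A ballot is a function $b:\mathbf C\to[m]$ with $|b^{-1}(i)|=\lambda_i$ for every $i$; $\mathbf C_\lambda$ denotes the set of ballots. The profile space is $P=\mathbb R^{\mathbf C_\lambda}$ with basis $\{\delta_b\}$ (indicator functions) and inner product $\mathbf p\cdot\mathbf q=\sum_b\mathbf p(b)\mathbf q(b)$. For candidates $X,Y$: $\mathbf a_{X>Y}=\sum_{b:\,b(X)<b(Y)}\delta_b$ and $\mathbf r_{X>Y}=\mathbf a_{X>Y}-\mathbf a_{Y>X}$; by convention, $X$ defeats $Y$ in a head-to-head race in $\mathbf p$ iff $\mathbf p\cdot\mathbf r_{X>Y}>0$. For $\mathbf w\in\mathbb R^m$ (a function $[m]\to\mathbb R$) and $X\in\mathbf C$, $\mathbf v_X\in P$ is $\mathbf v_X(b)=\mathbf w(b(X))$; the positional voting method $B_{\mathbf w}:P\to\mathbb R^{\mathbf C}$ is $B_{\mathbf w}(\mathbf p)(X)=\mathbf p\cdot\mathbf v_X$. A map $F:P\to\mathbb R^{\mathbf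 C}$ is trivial if $F(\mathbf p)$ is a constant function on $\mathbf C$ for every $\mathbf p$, and nontrivial otherwise. $F$ satisfies the strong majority criterion if for every ordered pair of distinct candidates $X,Y$ and every $\mathbf p\in P$ with $\mathbf p\cdot\mathbf r_{X>Y}>0$, we have $F(\mathbf p)(X)>F(\mathbf p)(Y)$. *)

From HB Require Import structures.
From mathcomp Require Import all_boot all_order all_algebra.
Import Order.TTheory GRing.Theory Num.Theory.
Local Open Scope ring_scope.

(* Positions [m] = {1,...,m} are represented by 'I_m = {0,...,m-1}
   (position i+1 of the paper is the ordinal i; so position 1 = ord0). *)

Definition is_ballot (C : finType) {m : nat} (lam : 'I_m -> nat)
  (b : {ffun C -> 'I_m}) : bool :=
  [forall i : 'I_m, #|[set x | b x == i]| == lam i].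

Definition ballot (C : finType) {m : nat} (lam : 'I_m -> nat) :=
  {b : {ffun C -> 'I_m} | is_ballot C lam b}.
HB.instance Definition _ C m lam := Finite.on (@ballot C m lam).

Definition profile (R : realFieldType) (C : finType) {m : nat} (lam : 'I_m -> nat) :=
  ballot C lam -> R.

Definition pdot {R : realFieldType} {C : finType} {m : nat} {lam : 'I_m -> nat}
  (p q : profile R C lam) : R := \sum_(b : ballot C lam) p b * q b.

Definition a_vec (R : realFieldType) {C : finType} {m : nat} (lam : 'I_m -> nat)
  (X Y : C) : profile R C lam :=
  fun b => if (val b X < val b Y)%N then 1 else 0.

Definition r_vec (R : realFieldType) {C : finType} {m : nat} (lam : 'I_m -> nat)
  (X Y : C) : profile R C lam :=
  fun b => a_vec R lam X Y b - a_vec R lam Y X b.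

Definition v_vec {R : realFieldType} (C : finType) {m : nat} (lam : 'I_m -> nat)
  (w : 'I_m -> R) (X : C) : profile R C lam :=
  fun b => w (val b X).

Definition positional {R : realFieldType} (C : finType) {m : nat} (lam : 'I_m -> nat)
  (w : 'I_m -> R) (p : profile R C lam) : C -> R :=
  fun X => pdot p (v_vec C lam w X).

Definition trivial_method {R : realFieldType} {C : finType} {m : nat} {lam : 'I_m -> nat}
  (F : profile R C lam -> C -> R) : Prop :=
  forall p : profile R C lam, forall X Y : C, F p X = F p Y.

Definition strong_majority {R : realFieldType} {C : finType} {m : nat} {lam : 'I_m -> nat}
  (F : profile R C lam -> C -> R) : Prop :=
  forall X Y : C, X != Y -> forall p : profile R C lam,
    0 < pdot p (r_vec R lam X Y) -> F p Y < F p X.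

Definition composition (C : finType) {m : nat} (lam : 'I_m -> nat) : Prop :=
  (forall i, (0 < lam i)%N) /\ (\sum_(i < m) lam i)%N = #|C|.

(* Ballots are closed under relabelling the candidates, so any two distinct
   candidates X, Y can be placed at any two distinct positions i, j.  Testing
   strong majority on the profiles supported on one or two ballots then shows
   that the score gap w(i) - w(j) is positive and the same for every pair of
   positions i < j.  With two positions this constant gap makes
   B_w(p)(X) - B_w(p)(Y) a positive multiple of p . r_{X>Y}; with three or
   more positions, w(1) - w(3) = w(1) - w(2) = w(2) - w(3) forces the gap to
   vanish, so w is constant and B_w is trivial. *)

From HB Require Import structures.
From mathcomp Require Import all_boot all_order all_algebra all_fingroup.
From mathcomp Require Import ring.
Import Order.TTheory GRing.Theory Num.Theory.

Lemma card_fiber_codom (T : finType) (U : eqType) (f : T -> U) (y : U) :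
  #|[set x | f x == y]| = count_mem y (codom f).
Proof.
rewrite cardsE cardE /enum_mem size_filter /codom /image_mem count_map enumT.
by apply: eq_count => x; rewrite !inE.
Qed.

Section Ballots.

Context {C : finType} {m : nat} {lam : 'I_m -> nat}.

Lemma ballot_exists : composition C lam -> exists b, is_ballot C lam b.
Proof.
case=> _ sum_lam.
pose s := flatten [seq nseq (lam i) i | i <- enum 'I_m].
have size_s : size s == #|C|.
  rewrite size_flatten /shape -map_comp sumnE big_map big_enum -sum_lam /=.
  by apply/eqP/eq_bigr => i _; rewrite size_nseq.
exists (Finfun (Tuple size_s)); apply/forallP => i.
rewrite card_fiber_codom codom_ffun FinfunK /= count_flatten -map_comp.
rewrite sumnE big_map big_enum /= (bigD1 i) //= count_nseq /= eqxx mul1n.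
by rewrite big1 ?addn0 // => j /negbTE ji; rewrite /= count_nseq /= ji.
Qed.

Lemma is_ballot_perm (b : {ffun C -> 'I_m}) (s : {perm C}) :
  is_ballot C lam b -> is_ballot C lam [ffun x => b (s x)].
Proof.
move=> /forallP b_lam; apply/forallP => i.
have -> : [set x | [ffun x => b (s x)] x == i] = s @^-1: [set x | b x == i].
  by apply/setP => x; rewrite !inE ffunE.
by rewrite card_preimset; [exact: b_lam | exact: perm_inj].
Qed.

Lemma ballot_onto (i : 'I_m) {b : {ffun C -> 'I_m}} :
  composition C lam -> is_ballot C lam b -> exists x, b x = i.
Proof.
case=> lam_gt0 _ /forallP /(_ i) /eqP card_i.
have : (0 < #|[set x | b x == i]|)%N by rewrite card_i.
by case/card_gt0P => x; rewrite inE => /eqP; exists x.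
Qed.

Lemma exists_ballot_at {X Y : C} {i j : 'I_m} :
  composition C lam -> X != Y -> i != j ->
  exists b : ballot C lam, val b X = i /\ val b Y = j.
Proof.
move=> lamC XY ij.
have [b0 b0_ballot] := ballot_exists lamC.
have [X0 b0X0] := ballot_onto i lamC b0_ballot.
pose b1 := [ffun x => b0 (tperm X X0 x)].
have b1_ballot : is_ballot C lam b1 by exact: is_ballot_perm.
have b1X : b1 X = i by rewrite ffunE tpermL b0X0.
have [Y1 b1Y1] := ballot_onto j lamC b1_ballot.
have XY1 : X != Y1 by apply: contra_neq ij => XY1; rewrite -b1X -b1Y1 XY1.
pose b2 := [ffun x => b1 (tperm Y Y1 x)].
exists (exist _ b2 (is_ballot_perm _ _ b1_ballot)); split => /=.
  by rewrite ffunE tpermD // eq_sym.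
by rewrite ffunE tpermL.
Qed.

End Ballots.

Local Open Scope ring_scope.

Section Profiles.

Context {R : realFieldType} {C : finType} {m : nat} {lam : 'I_m -> nat}.
Implicit Types (p q : profile R C lam) (b : ballot C lam) (w : 'I_m -> R).

Definition pdelta b0 : profile R C lam := fun b => (b == b0)%:R.

Lemma pdot_delta b0 q : pdot (pdelta b0) q = q b0.
Proof.
rewrite /pdot (bigD1 b0) //= /pdelta eqxx mul1r big1 ?addr0 // => b /negbTE bb0.
by rewrite /pdelta bb0 mul0r.
Qed.

Lemma pdot_comb (a c : R) p1 p2 q :
  pdot (fun b => a * p1 b + c * p2 b) q = a * pdot p1 q + c * pdot p2 q.
Proof.
rewrite /pdot !mulr_sumr -big_split /=.
by apply: eq_bigr => b _; rewrite mulrDl !mulrA.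
Qed.

Lemma positional_subE w p (X Y : C) :
  positional C lam w p X - positional C lam w p Y =
  pdot p (fun b => w (val b X) - w (val b Y)).
Proof. by rewrite /positional /pdot -sumrB; apply: eq_bigr => b _; rewrite mulrBr. Qed.

Lemma r_vec_lt (X Y : C) b : (val b X < val b Y)%N -> r_vec R lam X Y b = 1.
Proof. by move=> XY; rewrite /r_vec /a_vec XY ltnNge (ltnW XY) subr0. Qed.

Section StrongMajority.

Context {w : 'I_m -> R} {X Y : C}.
Hypotheses (lamC : composition C lam) (XY : X != Y)
  (majority : strong_majority (positional C lam w)).

Lemma strong_majority_decreasing (i j : 'I_m) : (i < j)%N -> w j < w i.
Proof.
move=> ij; have [b [bX bY]] := exists_ballot_at lamC XY (negbT (ltn_eqF ij)).
have := majority X Y XY (pdelta b).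
rewrite /positional !pdot_delta r_vec_lt ?bX ?bY // /v_vec bX bY.
by apply.
Qed.

(* If two ballots ranking X above Y had different gaps d1 != d2, the profile
   (k + 1) b1 - k b2 with k = d1 / (d2 - d1) would give X a majority of 1
   over Y but the same score. *)
Lemma strong_majority_gap_eq b1 b2 :
  (val b1 X < val b1 Y)%N -> (val b2 X < val b2 Y)%N ->
  w (val b1 X) - w (val b1 Y) = w (val b2 X) - w (val b2 Y).
Proof.
move=> b1XY b2XY; set d1 := _ - _; set d2 := _ - _.
have [//|d12] := eqVneq d1 d2.
have d21 : d2 - d1 != 0 by rewrite subr_eq0 eq_sym.
pose k := d1 / (d2 - d1).
pose p := fun b => (k + 1) * pdelta b1 b + - k * pdelta b2 b.
have p_majority : pdot p (r_vec R lam X Y) = 1.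
  by rewrite pdot_comb !pdot_delta !r_vec_lt // !mulr1 addrAC subrr add0r.
have p_tie : pdot p (fun b => w (val b X) - w (val b Y)) = 0.
  by rewrite pdot_comb !pdot_delta -/d1 -/d2 /k; field.
have := majority X Y XY p; rewrite p_majority => /(_ ltr01).
by rewrite -subr_gt0 positional_subE p_tie ltxx.
Qed.

Lemma strong_majority_gap_const (i j i' j' : 'I_m) :
  (i < j)%N -> (i' < j')%N -> w i - w j = w i' - w j'.
Proof.
move=> ij ij'.
have [b [bX bY]] := exists_ballot_at lamC XY (negbT (ltn_eqF ij)).
have [b' [b'X b'Y]] := exists_ballot_at lamC XY (negbT (ltn_eqF ij')).
rewrite -bX -bY -b'X -b'Y (strong_majority_gap_eq b b') //.
  by rewrite bX bY.
by rewrite b'X b'Y.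
Qed.

End StrongMajority.

Lemma positional_const_trivial w :
  (forall i j, w i = w j) -> trivial_method (positional C lam w).
Proof.
move=> w_const p X Y; rewrite /positional /pdot.
by apply: eq_bigr => b _; rewrite /v_vec (w_const (val b X) (val b Y)).
Qed.

End Profiles.

Lemma eq_gaps_const (R : zmodType) (m : nat) (w : 'I_m -> R) :
  (2 < m)%N ->
  (forall i j i' j' : 'I_m, (i < j)%N -> (i' < j')%N -> w i - w j = w i' - w j') ->
  forall i j, w i = w j.
Proof.
move=> m_gt2 gap.
pose o0 := Ordinal (ltn_trans (ltn0Sn 1) m_gt2).
pose o1 := Ordinal (ltnW m_gt2); pose o2 := Ordinal m_gt2.
have w_o1 (j : 'I_m) : (0 < j)%N -> w j = w o1.
  by move=> j_gt0; apply/oppr_inj/(addrI (w o0))/gap.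
have w_o0 : w o0 = w o1.
  by apply/eqP; rewrite -subr_eq0 -(gap o1 o2 o0 o1) // (w_o1 o2) // subrr.
suff w_const j : w j = w o1 by move=> i j; rewrite (w_const i) (w_const j).
by have [j0|] := posnP j; [rewrite -w_o0; congr w; apply: val_inj | apply: w_o1].
Qed.

Lemma ord2_cases (x : 'I_2) : x = ord0 \/ x = ord_max.
Proof. by case: x => -[|[|//]] x2; [left | right]; apply: val_inj. Qed.

Lemma positional_sub_ord2 {R : realFieldType} {C : finType} {lam : 'I_2 -> nat}
  (w : 'I_2 -> R) (p : profile R C lam) (X Y : C) :
  positional C lam w p X - positional C lam w p Y =
  (w ord0 - w ord_max) * pdot p (r_vec R lam X Y).
Proof.
rewrite positional_subE /pdot mulr_sumr; apply: eq_bigr => b _.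
rewrite mulrCA /r_vec /a_vec; congr (_ * _).
by case: (ord2_cases (val b X)) => ->; case: (ord2_cases (val b Y)) => -> /=;
  rewrite ?subrr ?mulr0 ?subr0 ?mulr1 ?sub0r ?mulrN1 ?opprB.
Qed.

Theorem mainTheorem10 (R : realFieldType) (C : finType) (hC : (2 <= #|C|)%N) :
  (forall (lam : 'I_2 -> nat) (w : 'I_2 -> R),
     composition C lam ->
     (strong_majority (positional C lam w) <-> w ord_max < w ord0))
  /\
  (forall (m : nat) (lam : 'I_m -> nat) (w : 'I_m -> R),
     (2 < m)%N -> composition C lam ->
     ~ (~ trivial_method (positional C lam w) /\
        strong_majority (positional C lam w))).
Proof.
have /card_gt1P [X [Y [_ _ XY]]] := hC.
split=> [lam w lamC | m lam w m_gt2 lamC [nontrivial majority]].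
  split=> [majority | w_dec X' Y' _ p p_XY].
    by apply: (strong_majority_decreasing lamC XY majority).
  by rewrite -subr_gt0 positional_sub_ord2 mulr_gt0 // subr_gt0.
apply/nontrivial/positional_const_trivial/eq_gaps_const => //.
exact: strong_majority_gap_const lamC XY majority.
Qed.
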